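(* Let $\mathcal{H}_X,\mathcal{H}_Y$ be reproducing kernel Hilbert spaces, let $(X_1,Y_1),\dots,(X_n,Y_n)$ be data points with centered feature vectors $\tilde{\Phi}(X_i)\in\mathcal{H}_X$, $\tilde{\Phi}(Y_i)\in\mathcal{H}_Y$. Let $\zeta:[0,\infty)\to\mathbb{R}$ satisfy (i) $\zeta$ is non-decreasing, $\zeta(0)=0$ and $\zeta(t)/t\to0$ as $t\to0$; (ii) $\varphi(t)=\zeta'(t)/t$ exists and is finite; (iii) $\zeta'$ and $\varphi$ are continuous and bounded; and assume moreover that $\varphi$ is non-increasing. Let $$J(\Sigma)=\sum_{i=1}^n \zeta\big(\|\tilde{\Phi}(X_i)\otimes\tilde{\Phi}(Y_i)-\Sigma\|\big),\qquad S(\Sigma)=\sum_{i=1}^n\varphi\big(\|\tilde{\Phi}(X_i)\otimes\tilde{\Phi}(Y_i)-\Sigma\|\big)\big(\tilde{\Phi}(X_i)\otimes\tilde{\Phi}(Y_i)-\Sigma\big),$$ norms being in $\mathcal{H}_X\otimes\mathcal{H}_Y$, and let $U=\{\Sigma\in\mathcal{H}_X\otimes\mathcal{H}_Y: S(\Sigma)=0\}$. Let $\{\Sigma^{(h)}\}_{h\ge1}$ be the sequence produced by the KIRWLS algorithm, i.e. $\Sigma^{(h+1)}=\sum_{i=1}^n w_i^{(h)}\tilde{\Phi}(X_i)\otimes\tilde{\Phi}(Y_i)$ with $$w_i^{(h)}=\frac{\varphi(\|\tilde{\Phi}(X_i)\otimes\tilde{\Phi}(Y_i)-\Sigma^{(h)}\|)}{\sum_{b=1}^n\varphi(\|\tilde{\Phi}(X_b)\otimes\tilde{\Phi}(Y_b)-\Sigma^{(h)}\|)}.$$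 Then $J(\Sigma^{(h)})$ decreases monotonically at every iteration and converges, and $$\inf_{\Sigma\in U}\|\Sigma^{(h)}-\Sigma\|_{\mathcal{H}_X\otimes\mathcal{H}_Y}\to0\quad\text{as }h\to\infty.$$
   Context: Centered feature vectors are $\tilde{\Phi}(X_i)=k_X(\cdot,X_i)-m_X$, $\tilde{\Phi}(Y_i)=k_Y(\cdot,Y_i)-m_Y$ for positive definite kernels $k_X,k_Y$ and fixed (empirical, possibly weighted) kernel mean elements $m_X\in\mathcal{H}_X$, $m_Y\in\mathcal{H}_Y$. $\mathcal{H}_X\otimes\mathcal{H}_Y$ is the Hilbert tensor product (Hilbert–Schmidt norm). *)

From HB Require Import structures.
From mathcomp Require Import all_boot all_order all_algebra.
From mathcomp Require Import all_classical all_reals all_analysis.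
Set Implicit Arguments. Unset Strict Implicit. Unset Printing Implicit Defensive.
Import Order.TTheory GRing.Theory Num.Theory.
Import numFieldNormedType.Exports.
Local Open Scope classical_set_scope.
Local Open Scope ring_scope.

Definition inner_product_for (R : realType) (V : normedModType R)
  (ip : V -> V -> R) : Prop :=
  [/\ forall x y, ip x y = ip y x,
      forall (a : R) (x y z : V), ip (a *: x + y) z = a * ip x z + ip y z
    & forall x, `|x| = Num.sqrt (ip x x)].

Definition tensor_span (R : realType) (HX HY H : normedModType R)
  (tens : HX -> HY -> H) : set H :=
  [set s | exists (m : nat) (c : 'I_m -> R) (x : 'I_m -> HX) (y : 'I_m -> HY),
      s = \sum_(k < m) c k *: tens (x k) (y k)].

(* (H, ipH, tens) is the Hilbert tensor product of (HX, ipX) and (HY, ipY):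
   tens is bilinear, <x (x) y, x' (x) y'> = <x,x'><y,y'>, and the elementary
   tensors span a dense subspace (H is complete by its type). *)
Definition hilbert_tensor_product (R : realType) (HX HY H : normedModType R)
  (ipX : HX -> HX -> R) (ipY : HY -> HY -> R) (ipH : H -> H -> R)
  (tens : HX -> HY -> H) : Prop :=
  [/\ forall (a : R) x x' y, tens (a *: x + x') y = a *: tens x y + tens x' y,
      forall (a : R) x y y', tens x (a *: y + y') = a *: tens x y + tens x y',
      forall x x' y y', ipH (tens x y) (tens x' y') = ipX x x' * ipY y y'
    & closure (tensor_span tens) = setT].

Section Objective.
Variables (R : realType) (H : normedModType R) (n : nat).

Definition J_obj (zeta : R -> R) (Z : 'I_n -> H) (Sig : H) : R :=
  \sum_(i < n) zeta `|Z i - Sig|.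

Definition S_map (phi : R -> R) (Z : 'I_n -> H) (Sig : H) : H :=
  \sum_(i < n) phi `|Z i - Sig| *: (Z i - Sig).

Definition kirwls_weight (phi : R -> R) (Z : 'I_n -> H) (Sig : H) (i : 'I_n) : R :=
  phi `|Z i - Sig| / \sum_(b < n) phi `|Z b - Sig|.

Definition kirwls_step (phi : R -> R) (Z : 'I_n -> H) (Sig : H) : H :=
  \sum_(i < n) kirwls_weight phi Z Sig i *: Z i.
End Objective.

(** Since phi = zeta'/t is non-increasing, t |-> zeta t - phi t0 * t^2 / 2 is maximal at
    t = t0, so zeta t <= zeta t0 + phi t0 / 2 * (t^2 - t0^2) for all t, t0 >= 0.  Summing
    this at t0 = |Z_i - Sigma| gives a quadratic majorant of J touching it at Sigma, whose
    minimiser is the phi-weighted mean Sigma' of the Z_i, i.e. the KIRWLS step; by the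
    Konig-Huygens identity, J(Sigma') + W |Sigma' - Sigma|^2 / 2 <= J(Sigma), W being the
    total weight.  Hence J decreases and converges, and as S(Sigma) = W (Sigma' - Sigma) with
    W <= n phi(0), S(Sigma^(h)) -> 0.  The iterates stay in the compact set of combinations
    of the Z_i with coefficients in [0, 1], where the continuous |S| has a positive minimum
    outside any neighbourhood of its zero set U; so they eventually enter every such
    neighbourhood. *)

From HB Require Import structures.
From mathcomp Require Import all_boot all_order all_algebra.
From mathcomp Require Import all_classical all_reals all_analysis.
From mathcomp Require Import ring lra.
Set Implicit Arguments. Unset Strict Implicit. Unset Printing Implicit Defensive.
Import Order.TTheory GRing.Theory Num.Theory.
Import numFieldNormedType.Exports.
Local Open Scope classical_set_scope.
Local Open Scope ring_scope.

Section HalfQuadraticMajorization.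
Variables (R : realType) (zeta phi : R -> R).
Hypothesis zeta_nondecr : forall s t : R, 0 <= s -> s <= t -> zeta s <= zeta t.
Hypothesis zeta0 : zeta 0 = 0.
Hypothesis zeta_o : (fun t => zeta t / t) @ 0^'+ --> 0.
Hypothesis zeta_der : forall t : R, 0 < t -> derivable zeta t 1.
Hypothesis phi_def : forall t : R, 0 < t -> phi t = derive1 zeta t / t.
Hypothesis phi_nonincr : forall s t : R, 0 <= s -> s <= t -> phi t <= phi s.

Lemma is_derive_zeta_quad (p t : R) : 0 < t ->
  is_derive t 1 (fun u => zeta u - p / 2 * u ^+ 2) ((phi t - p) * t).
Proof.
move=> t_gt0; have zeta' := derivableP (zeta_der t_gt0).
rewrite -derive1E in zeta'.
have quad' : is_derive t (1 : R) (fun u : R => p / 2 * u ^+ 2) (p / 2 * (2 * t)).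
  by apply: is_derive_eq; rewrite /GRing.scale /= !mulr1; ring.
apply: is_derive_eq.
by rewrite phi_def //; field; rewrite gt_eqF.
Qed.

Lemma mvt_zeta_quad (p a b : R) : 0 < a -> a < b ->
  exists2 c, a < c < b &
    (zeta b - p / 2 * b ^+ 2) - (zeta a - p / 2 * a ^+ 2) = (phi c - p) * c * (b - a).
Proof.
move=> a_gt0 ab.
have deriv x : a <= x -> is_derive x 1 (fun u => zeta u - p / 2 * u ^+ 2) ((phi x - p) * x).
  by move=> ax; apply: is_derive_zeta_quad; exact: lt_le_trans ax.
have [x||c] := MVT ab (f := fun u => zeta u - p / 2 * u ^+ 2) (df := fun x => (phi x - p) * x).
- by rewrite in_itv /= => /andP[/ltW /deriv].
- apply: derivable_within_continuous => y; rewrite in_itv /= => /andP[/deriv].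
  by case.
by rewrite in_itv /= => cab ->; exists c.
Qed.

Lemma phi_ge0 t : 0 <= t -> 0 <= phi t.
Proof.
(* If phi t < 0, then phi < 0 on [t + 1, t + 2], where zeta would therefore decrease. *)
move=> t_ge0; rewrite leNgt; apply/negP => phi_t_lt0.
have [||c /andP[tc ct]] := @mvt_zeta_quad 0 (t + 1) (t + 2); try lra.
rewrite !(mul0r, subr0) (_ : t + 2 - (t + 1) = 1) ?mulr1 => [zeta_incr|]; last ring.
have phi_c_lt0 : phi c < 0 by apply: le_lt_trans phi_t_lt0; apply: phi_nonincr; lra.
have : zeta (t + 1) <= zeta (t + 2) by apply: zeta_nondecr; lra.
have : phi c * c < 0 by rewrite pmulr_llt0 //; lra.
lra.
Qed.

Lemma zeta_ge0 t : 0 <= t -> 0 <= zeta t.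
Proof. by move=> t_ge0; rewrite -zeta0; apply: zeta_nondecr. Qed.

Lemma zeta_cvg0 : zeta t @[t --> 0^'+] --> 0.
Proof.
have -> : zeta = (fun t => zeta t / t) \* id.
  apply/funext => t /=; have [->|t_neq0] := eqVneq t 0; first by rewrite zeta0 mulr0.
  by rewrite divfK.
rewrite -[X in _ --> X](mulr0 0); apply: cvgM zeta_o _.
exact: cvg_at_right_filter (@cvg_id _ (nbhs (0 : R))).
Qed.

Lemma zeta_le_quad_pos t t0 : 0 < t -> 0 < t0 ->
  zeta t <= zeta t0 + phi t0 / 2 * (t ^+ 2 - t0 ^+ 2).
Proof.
move=> t_gt0 t0_gt0.
suff : zeta t - phi t0 / 2 * t ^+ 2 <= zeta t0 - phi t0 / 2 * t0 ^+ 2 by lra.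
have [tt0|t0t|->] := ltgtP t t0; last by [].
- rewrite -subr_ge0.
  have [c /andP[tc ct0] ->] := mvt_zeta_quad (phi t0) t_gt0 tt0.
  by rewrite !mulr_ge0 ?subr_ge0 //; [apply: phi_nonincr | ..]; lra.
- rewrite -subr_le0.
  have [c /andP[t0c ct] ->] := mvt_zeta_quad (phi t0) t0_gt0 t0t.
  rewrite -mulrA mulr_le0_ge0 ?mulr_ge0 ?subr_le0 ?subr_ge0 //; [apply: phi_nonincr | ..]; lra.
Qed.

Lemma zeta_le_quad t t0 : 0 <= t -> 0 <= t0 ->
  zeta t <= zeta t0 + phi t0 / 2 * (t ^+ 2 - t0 ^+ 2).
Proof.
(* The cases t = 0 and t0 = 0 follow from the positive case in the limit 0^+. *)
rewrite !le0r => /predU1P[->|t_gt0] /predU1P[->|t0_gt0].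
- by rewrite subrr mulr0 addr0.
- have lim_rhs : zeta t0 + phi t0 / 2 * (y ^+ 2 - t0 ^+ 2) @[y --> 0^'+] -->
                 zeta t0 + phi t0 / 2 * (0 ^+ 2 - t0 ^+ 2).
    apply: cvg_at_right_filter; apply: cvgD; first exact: cvg_cst.
    by apply: cvgMr; apply: cvgB; [exact: exprn_continuous | exact: cvg_cst].
  rewrite zeta0; apply: (ler_cvg_to zeta_cvg0 lim_rhs).
  near=> y; apply: zeta_le_quad_pos => //; near: y; exact: nbhs_right_gt.
- rewrite zeta0 add0r expr0n subr0 /=.
  have lim_rhs : zeta y + phi 0 / 2 * t ^+ 2 @[y --> 0^'+] --> phi 0 / 2 * t ^+ 2.
    by rewrite -[X in _ --> X]add0r; apply: cvgD; [exact: zeta_cvg0 | exact: cvg_cst].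
  apply: (ler_cvg_to (cvg_cst _) lim_rhs).
  near=> y.
  have y_gt0 : 0 < y by near: y; exact: nbhs_right_gt.
  apply: le_trans (zeta_le_quad_pos t_gt0 y_gt0) _; rewrite lerD2l.
  have phi_y_ge0 : 0 <= phi y by apply: phi_ge0; lra.
  apply: (@le_trans _ _ (phi y / 2 * t ^+ 2)).
    by rewrite ler_wpM2l ?divr_ge0 // gerDl oppr_le0 sqr_ge0.
  rewrite ler_wpM2r ?sqr_ge0 // ler_pM2r //.
  by apply: phi_nonincr; lra.
- exact: zeta_le_quad_pos.
Unshelve. all: end_near.
Qed.

End HalfQuadraticMajorization.

Section InnerProduct.
Variables (R : realType) (V : normedModType R) (ip : V -> V -> R).
Hypothesis ip_norm : inner_product_for ip.

Lemma ipC x y : ip x y = ip y x. Proof. by case: ip_norm. Qed.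

Lemma ipDl x y z : ip (x + y) z = ip x z + ip y z.
Proof. by case: ip_norm => _ ipL _; rewrite -[x]scale1r ipL mul1r scale1r. Qed.

Lemma ip0l z : ip 0 z = 0.
Proof. by have := ipDl 0 0 z; rewrite addr0; lra. Qed.

Lemma ipZl a x z : ip (a *: x) z = a * ip x z.
Proof. by case: ip_norm => _ ipL _; rewrite -[a *: x]addr0 ipL ip0l addr0. Qed.

Lemma ipDr x y z : ip z (x + y) = ip z x + ip z y.
Proof. by rewrite ipC ipDl !(ipC z). Qed.

Lemma ip_suml (I : finType) (F : I -> V) z : ip (\sum_i F i) z = \sum_i ip (F i) z.
Proof. by apply: (big_morph (ip^~ z)) => [??|]; rewrite ?ipDl ?ip0l. Qed.

Lemma ip_ge0 x : 0 <= ip x x.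
Proof.
case: ip_norm => _ _ normE; rewrite leNgt; apply/negP => ip_lt0.
have /normr0_eq0 x0 : `|x| = 0 by rewrite normE; apply/eqP; rewrite sqrtr_eq0 ltW.
by move: ip_lt0; rewrite x0 ip0l ltxx.
Qed.

Lemma sqr_norm_ip x : `|x| ^+ 2 = ip x x.
Proof. by case: ip_norm => _ _ ->; rewrite sqr_sqrtr // ip_ge0. Qed.

Lemma sqr_normD x y : `|x + y| ^+ 2 = `|x| ^+ 2 + 2 * ip x y + `|y| ^+ 2.
Proof. by rewrite !sqr_norm_ip ipDl !ipDr (ipC y x); ring. Qed.

Lemma konig_huygens (n : nat) (p : 'I_n -> R) (Z : 'I_n -> V) (m s : V) :
  (\sum_i p i) *: m = \sum_i p i *: Z i ->
  \sum_i p i * `|Z i - s| ^+ 2 =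
    \sum_i p i * `|Z i - m| ^+ 2 + (\sum_i p i) * `|m - s| ^+ 2.
Proof.
move=> mean_m.
have split_sqr i : p i * `|Z i - s| ^+ 2 =
    p i * `|Z i - m| ^+ 2 + 2 * ip (p i *: (Z i - m)) (m - s) + p i * `|m - s| ^+ 2.
  by rewrite -[Z i - s](subrKA m) sqr_normD ipZl; ring.
have centered : \sum_i p i *: (Z i - m) = 0.
  by rewrite (eq_bigr _ (fun i _ => scalerBr _ _ _)) sumrB -scaler_suml mean_m subrr.
rewrite (eq_bigr _ (fun i _ => split_sqr i)) !big_split /= -mulr_sumr -ip_suml.
by rewrite centered ip0l mulr0 addr0 mulr_suml.
Qed.

End InnerProduct.

Section BoxCombinations.
Variables (R : realType) (V : normedModType R) (n : nat) (Z : 'I_n -> V).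

Definition box_combinations : set V :=
  (fun c : 'rV[R]_n => \sum_i c ord0 i *: Z i) @`
    [set c : 'rV[R]_n | forall i, `[0, 1]%classic (c ord0 i)].

Lemma box_combinations_compact : compact box_combinations.
Proof.
apply: continuous_compact; last first.
  exact: (@rV_compact R n (fun=> `[0, 1]%classic) (fun=> @segment_compact R 0 1)).
apply: continuous_subspaceT; apply: (continuous_big add_continuous) => i _ c.
by apply: continuousZ; [exact: coord_continuous | exact: cst_continuous].
Qed.

End BoxCombinations.

Lemma cvg_within_image (R : realType) {T : Type} (F : set_system T) {FF : Filter F}
    (g : T -> R) (A : set R) (t : R) :
  (forall x, A (g x)) -> g @ F --> t -> g @ F --> within A (nbhs t).
Proof.
move=> gA gt P AP; have g_AP : F (g @^-1` [set y | A y -> P y]) := gt _ AP.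
by change (F (g @^-1` P)); apply: filterS g_AP => x /(_ (gA x)).
Qed.

Lemma S_map_continuous (R : realType) (V : normedModType R) (n : nat) (Z : 'I_n -> V)
    (phi : R -> R) :
  {within [set t | 0 <= t], continuous phi} -> continuous (S_map phi Z).
Proof.
move=> phi_cont; apply: (continuous_big add_continuous) => i _ s.
have dist_cont : continuous (fun y => Z i - y).
  by move=> y; apply: continuousB; [exact: cst_continuous | exact: cvg_id].
rewrite /continuous_at; apply: cvgZ; last exact: dist_cont.
have norm_cvg : `|Z i - y| @[y --> s] --> `|Z i - s|.
  exact: continuous_comp (dist_cont s) (@norm_continuous _ _ _).
have phi_at := (subspace_continuousP _ _).1 phi_cont _ (normr_ge0 (Z i - s)).
have norm_ge0 y : [set t | 0 <= t] `|Z i - y| by exact: normr_ge0.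
exact: cvg_comp (cvg_within_image norm_ge0 norm_cvg) phi_at.
Qed.

Section ApproachZeros.
Variables (R : realType) (V : normedModType R).

Lemma eventually_near_zeros (K : set V) (S : V -> V) (x : nat -> V) :
  compact K -> continuous S -> (\forall h \near \oo, K (x h)) ->
  S (x h) @[h --> \oo] --> 0 ->
  forall e, 0 < e -> \forall h \near \oo, exists2 s, S s = 0 & `|x h - s| < e.
Proof.
(* |S| attains a positive minimum on the compact set of points of K that are not
   e-close to a zero of S; eventually |S (x h)| is below it. *)
move=> K_compact S_cont xK Sx0 e e_gt0.
pose near_zeros := \bigcup_(s in [set s | S s = 0]) ball s e.
have near_zerosP y : near_zeros y -> exists2 s, S s = 0 & `|y - s| < e.
  by case=> s S0; rewrite -ball_normE /= distrC; exists s.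
suff : \forall h \near \oo, near_zeros (x h) by apply: filterS => h /near_zerosP.
pose far := K `&` ~` near_zeros.
have [[c far_c]|far0] := pselect (far !=set0); last first.
  apply: filterS xK => h xhK; apply: contrapT => xh_far.
  by apply: far0; exists (x h).
have far_compact : compact far.
  apply: compact_closedI K_compact _; apply: open_closedC.
  by apply: bigcup_open => s _; exact: ball_open.
have [m far_m m_min] : exists2 m, m \in far & forall y, y \in far -> `|S m| <= `|S y|.
  apply: compact_EVT_min; [by exists c | exact: far_compact |].
  apply: continuous_subspaceT => y.
  by apply: continuous_comp; [exact: S_cont | exact: norm_continuous].
have Sm_gt0 : 0 < `|S m|.
  rewrite normr_gt0; apply/eqP => Sm0; move: far_m; rewrite inE => -[_]; apply.
  by exists m => //; exact: ballxx.
near=> h.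
apply: contrapT => xh_far.
have Sxh_small : `|S (x h)| < `|S m| by near: h; exact: (cvgr0_norm_lt _ Sx0).
have : `|S m| <= `|S (x h)| by apply: m_min; rewrite inE; split => //; near: h.
by rewrite leNgt Sxh_small.
Unshelve. all: end_near.
Qed.

Lemma ereal_inf_norm_lt (U : set V) (x s : V) (e : R) : U s -> `|x - s| < e ->
  exists2 r : R, ereal_inf [set (`|x - t|)%:E | t in U] = r%:E & 0 <= r < e.
Proof.
move=> Us xs_lt.
have inf_ge0 : (0 <= ereal_inf [set (`|x - t|)%:E | t in U])%E.
  by apply: le_ereal_inf_tmp => _ [t _ <-]; rewrite lee_fin.
have inf_le : (ereal_inf [set (`|x - t|)%:E | t in U] <= (`|x - s|)%:E)%E.
  by apply: ereal_inf_lbound; exists s.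
move: inf_ge0 inf_le; case: ereal_inf => [r| |] //; rewrite !lee_fin => r_ge0 r_le.
by exists r => //; rewrite r_ge0 (le_lt_trans r_le).
Qed.

Lemma ereal_inf_dist_cvg0 (U : set V) (x : nat -> V) :
  (forall e, 0 < e -> \forall h \near \oo, exists2 s, U s & `|x h - s| < e) ->
  ereal_inf [set (`|x h - s|)%:E | s in U] @[h --> \oo] --> 0%E.
Proof.
move=> x_near_U; apply/fine_cvgP; split.
  apply: filterS (x_near_U 1 ltr01) => h [s Us /(ereal_inf_norm_lt Us)[r inf_r _]].
  by rewrite /= inf_r.
apply/cvgr0Pnorm_lt => e e_gt0.
apply: filterS (x_near_U e e_gt0) => h [s Us /(ereal_inf_norm_lt Us)[r inf_r /andP[r_ge0]]].
by rewrite /= inf_r /= ger0_norm.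
Qed.

Lemma cvg0_of_sqr_norm_le {T : Type} (F : set_system T) {FF : Filter F}
    (u : T -> V) (b : T -> R) (C : R) :
  (forall t, `|u t| ^+ 2 <= C * b t) -> b @ F --> 0 -> u @ F --> 0.
Proof.
move=> u_le b0; apply/norm_cvg0P.
have Cb0 : C * b t @[t --> F] --> 0 by rewrite -(mulr0 C); apply: cvgMr.
have sqr0 : `|u t| ^+ 2 @[t --> F] --> 0.
  by apply: (squeeze_cvgr _ (cvg_cst 0) Cb0); near=> t; rewrite sqr_ge0 u_le.
rewrite (_ : (fun t => `|u t|) = Num.sqrt \o (fun t => `|u t| ^+ 2)); last first.
  by apply/funext => t /=; rewrite sqrtr_sqr normr_id.
by rewrite -sqrtr0; apply: continuous_cvg; [exact: sqrt_continuous | exact: sqr0].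
Unshelve. all: end_near.
Qed.

End ApproachZeros.

Section KirwlsDescent.
Variables (R : realType) (H : normedModType R) (ip : H -> H -> R).
Hypothesis ip_norm : inner_product_for ip.
Variables (zeta phi : R -> R).
Hypothesis zeta_nondecr : forall s t : R, 0 <= s -> s <= t -> zeta s <= zeta t.
Hypothesis zeta0 : zeta 0 = 0.
Hypothesis zeta_o : (fun t => zeta t / t) @ 0^'+ --> 0.
Hypothesis zeta_der : forall t : R, 0 < t -> derivable zeta t 1.
Hypothesis phi_def : forall t : R, 0 < t -> phi t = derive1 zeta t / t.
Hypothesis phi_nonincr : forall s t : R, 0 <= s -> s <= t -> phi t <= phi s.
Variables (n : nat) (Z : 'I_n -> H).

Let phi_ge0 := phi_ge0 zeta_nondecr zeta_der phi_def phi_nonincr.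
Let zeta_ge0 := zeta_ge0 zeta_nondecr zeta0.
Let weight (s : H) i := phi `|Z i - s|.
Let total (s : H) := \sum_i weight s i.
Let step (s : H) := kirwls_step phi Z s.

Lemma J_obj_ge0 s : 0 <= J_obj zeta Z s.
Proof. by apply: sumr_ge0 => i _; apply: zeta_ge0. Qed.

Lemma kirwls_total_ge0 s : 0 <= total s.
Proof. by apply: sumr_ge0 => i _; apply: phi_ge0. Qed.

Lemma kirwls_total_le s : total s <= n%:R * phi 0.
Proof.
rewrite -[n in n%:R]card_ord mulr_natl -sumr_const.
by apply: ler_sum => i _; apply: phi_nonincr.
Qed.

Lemma kirwls_weight_in01 s i : 0 <= kirwls_weight phi Z s i <= 1.
Proof.
have weight_ge0 j : 0 <= weight s j by apply: phi_ge0.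
rewrite /kirwls_weight -/(weight s i) -/(total s) divr_ge0 //=; last exact: kirwls_total_ge0.
have [->|total_neq0] := eqVneq (total s) 0; first by rewrite invr0 mulr0.
rewrite ler_pdivrMr ?mul1r; last by rewrite lt_neqAle eq_sym total_neq0 kirwls_total_ge0.
by rewrite /total (bigD1 i) //= lerDl sumr_ge0.
Qed.

(* When all weights vanish, step s = 0 by the convention x / 0 = 0. *)
Lemma scale_kirwls_step s : total s *: step s = \sum_i weight s i *: Z i.
Proof.
rewrite /step /kirwls_step scaler_sumr.
have [total0|total_neq0] := eqVneq (total s) 0.
  apply: eq_bigr => i _; have /psumr_eq0P -> // := total0.
    by rewrite total0 !scale0r.
  by move=> j _; apply: phi_ge0.
by apply: eq_bigr => i _; rewrite scalerA /kirwls_weight mulrC divfK.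
Qed.

Lemma S_mapE s : S_map phi Z s = total s *: (step s - s).
Proof.
rewrite /S_map scalerBr scale_kirwls_step scaler_suml -sumrB.
by apply: eq_bigr => i _; rewrite scalerBr.
Qed.

Lemma J_kirwls_step_descent s :
  J_obj zeta Z (step s) + total s / 2 * `|step s - s| ^+ 2 <= J_obj zeta Z s.
Proof.
have majorize : J_obj zeta Z (step s) <= \sum_i (zeta `|Z i - s| +
    weight s i / 2 * (`|Z i - step s| ^+ 2 - `|Z i - s| ^+ 2)).
  by rewrite /J_obj; apply: ler_sum => i _; apply: zeta_le_quad.
rewrite big_split /= -/(J_obj zeta Z s) in majorize.
have halve : \sum_i weight s i / 2 * (`|Z i - step s| ^+ 2 - `|Z i - s| ^+ 2) =
    (\sum_i weight s i * `|Z i - step s| ^+ 2 - \sum_i weight s i * `|Z i - s| ^+ 2) / 2.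
  by rewrite -sumrB mulr_suml; apply: eq_bigr => i _; ring.
rewrite halve (konig_huygens ip_norm s (scale_kirwls_step s)) -/(total s) in majorize.
lra.
Qed.

Lemma J_kirwls_step_le s : J_obj zeta Z (step s) <= J_obj zeta Z s.
Proof.
apply: le_trans (J_kirwls_step_descent s); rewrite lerDl.
by rewrite mulr_ge0 ?divr_ge0 ?sqr_ge0 ?kirwls_total_ge0.
Qed.

Lemma sqr_norm_S_map_le s :
  `|S_map phi Z s| ^+ 2 <= 2 * (n%:R * phi 0) * (J_obj zeta Z s - J_obj zeta Z (step s)).
Proof.
set gap := J_obj zeta Z s - _.
have total_ge0 := kirwls_total_ge0 s.
have half_descent : total s * `|step s - s| ^+ 2 <= 2 * gap.
  by have := J_kirwls_step_descent s; rewrite /gap; lra.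
rewrite S_mapE normrZ ger0_norm // exprMn expr2 -mulrA.
rewrite (_ : 2 * _ * gap = n%:R * phi 0 * (2 * gap)); last by ring.
by apply: ler_pM; rewrite ?mulr_ge0 ?sqr_ge0 // kirwls_total_le.
Qed.

Lemma kirwls_step_in_box s : box_combinations Z (step s).
Proof.
exists (\row_i kirwls_weight phi Z s i).
  by move=> i /=; rewrite mxE in_itv /= kirwls_weight_in01.
by rewrite /step /kirwls_step; apply: eq_bigr => i _; rewrite mxE.
Qed.

End KirwlsDescent.

Theorem theorem3 (R : realType)
  (HX HY H : completeNormedModType R)
  (ipX : HX -> HX -> R) (ipY : HY -> HY -> R) (ipH : H -> H -> R)
  (tens : HX -> HY -> H)
  (hX : inner_product_for ipX) (hY : inner_product_for ipY)
  (hH : inner_product_for ipH)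
  (hT : hilbert_tensor_product ipX ipY ipH tens)
  (n : nat) (phiX : 'I_n -> HX) (phiY : 'I_n -> HY)
  (zeta phi : R -> R)
  (* (i) *)
  (zeta_nondecr : forall s t : R, 0 <= s -> s <= t -> zeta s <= zeta t)
  (zeta0 : zeta 0 = 0)
  (zeta_o : (fun t => zeta t / t) @ 0^'+ --> 0)
  (* (ii) *)
  (zeta_der : forall t : R, 0 < t -> derivable zeta t 1)
  (phi_def : forall t : R, 0 < t -> phi t = derive1 zeta t / t)
  (* (iii) *)
  (dzeta_cont : {in [set t | 0 < t], continuous (derive1 zeta)})
  (dzeta_bdd : exists M, forall t : R, 0 < t -> `|derive1 zeta t| <= M)
  (phi_cont : {within [set t | 0 <= t], continuous phi})
  (phi_bdd : exists M, forall t : R, 0 <= t -> `|phi t| <= M)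
  (* phi non-increasing *)
  (phi_nonincr : forall s t : R, 0 <= s -> s <= t -> phi t <= phi s)
  (* KIRWLS sequence: Sig h is Sigma^(h+1) *)
  (Sig : nat -> H)
  (Sig_step : forall h, Sig h.+1 =
     kirwls_step phi (fun i => tens (phiX i) (phiY i)) (Sig h)) :
  let Z := fun i => tens (phiX i) (phiY i) in
  let U := [set s : H | S_map phi Z s = 0] in
  (forall h, J_obj zeta Z (Sig h.+1) <= J_obj zeta Z (Sig h)) /\
  cvg ((fun h => J_obj zeta Z (Sig h)) @ \oo) /\
  ((fun h => ereal_inf [set (`|Sig h - s|)%:E | s in U]) @ \oo --> 0%E).
Proof.
move=> Z U.
pose J h := J_obj zeta Z (Sig h).
have J_nonincr h : J h.+1 <= J h.
  rewrite /J Sig_step.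
  exact: (J_kirwls_step_le hH zeta_nondecr zeta0 zeta_o zeta_der phi_def phi_nonincr).
have J_cvg : cvgn J.
  apply: nonincreasing_is_cvgn; first exact/nonincreasing_seqP.
  by exists 0 => _ [h _ <-]; exact: J_obj_ge0.
have gap0 : J h - J h.+1 @[h --> \oo] --> 0.
  rewrite -(subrr (limn J)); apply: cvgB; first exact: J_cvg.
  by rewrite cvg_shiftS; exact: J_cvg.
have S0 : S_map phi Z (Sig h) @[h --> \oo] --> 0.
  apply: cvg0_of_sqr_norm_le gap0 => h; rewrite /J Sig_step.
  exact: (sqr_norm_S_map_le hH zeta_nondecr zeta0 zeta_o zeta_der phi_def phi_nonincr).
split => //; split => //.
apply: ereal_inf_dist_cvg0 => e e_gt0.
apply: eventually_near_zeros (box_combinations_compact (Z := Z))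
  (S_map_continuous (Z := Z) phi_cont) _ S0 _ e_gt0.
exists 1%N => // -[|h] // _; rewrite Sig_step.
exact: (kirwls_step_in_box zeta_nondecr zeta_der phi_def phi_nonincr).
Qed.
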